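(* Let $G$ be a graph, let $s\in\mathbb{N}_{\geq 1}\cup\{\infty\}$ and let $k\in\mathbb{N}$. The following three statements are equivalent. (1) $\mathbf{cc}_s(G)\leq k$, i.e., there is a cop strategy $f$ on $G$ of cost at most $k$ such that for every robber strategy $R$ on $G$ the pair $(f,R)$ is cop-winning. (2) $G$ has no nonempty $(k+1,s)$-edge-hide-out. (3) $\delta^{s}_{\rm e}(G)\leq k$.
   Context: All graphs are finite, undirected, loopless, and may have parallel edges; $E(G)$ is the multiset of edges. For $s\in\mathbb{N}_{\geq1}\cup\{\infty\}$, an $s$-path is a path with at most $s$ edges (any path if $s=\infty$); a path of length $0$ from a vertex to itself is allowed. For $x\in V(G)$ and $S\subseteq V(G)\setminus\{x\}$, a set $A\subseteq E(G)$ is an $(s,x,S)$-edge-separator if every $s$-path of $G$ from $x$ to a vertex of $S$ contains an edge of $A$; $\mathbf{supp}_{G,s}(x,S)$ is the minimum size of such a separator (it is $0$ if $S=\emptyset$). For a layout (linear ordering) $L=\langle v_1,\dots,v_r\rangle$ of $V(G)$, the $s$-edge-support of $v_i$ is $\mathbf{supp}_{G,s}(v_i,\{v_1,\dots,v_{i-1}\})$; the $s$-edge-degeneracy of $L$ is the maximum $s$-edge-support of its vertices, and $\delta^{s}_{\rm e}(G)$ is the minimum of this over all layouts of $V(G)$. A $(k,s)$-edge-hide-out is a set $R\subseteq V(G)$ such that $\mathbf{supp}_{G,s}(x,R\setminus\{x\})\geq k$ for every $x\in R$. Search game: a cop strategy is a function $f:V(G)\to 2^{E(G)}$, with cost $\max_{v}|f(v)|$.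 A robber strategy is a pair $R=(v_{\rm start},g)$ with $v_{\rm start}\in V(G)$ and $g:2^{E(G)}\times V(G)\to V(G)$ such that for all $F,v$ there is an $s$-path from $v$ to $g(F,v)$ in $G\setminus F$ (so $g(F,v)=v$ is always allowed). The game scenario of $(f,R)$ is the sequence $v_0,F_1,v_1,F_2,v_2,\dots$ with $v_0=v_{\rm start}$, $F_i=f(v_{i-1})$, $v_i=g(F_i,v_{i-1})$; $(f,R)$ is cop-winning if $v_i=v_{i-1}$ for some $i\geq1$. $\mathbf{cc}_s(G)$ is the minimum $k$ such that some cop strategy of cost at most $k$ is cop-winning against every robber strategy. *)

From mathcomp Require Import all_boot all_order.
From mathcomp Require Import boolp.
Set Implicit Arguments. Unset Strict Implicit. Unset Printing Implicit Defensive.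

(* A finite loopless multigraph is given by a finite vertex type V, a finite
   type E of edge names (so parallel edges are distinct elements of E), and
   an endpoint map [ends : E -> V * V] with distinct endpoints. *)

(* s in N_{>=1} \cup {oo}: [Some n] is n, [None] is infinity. *)
Definition extn := option nat.

Section Graph.
Variables (V E : finType) (ends : E -> V * V).

Definition joins (e : E) (u v : V) : bool :=
  (ends e == (u, v)) || (ends e == (v, u)).

(* [walk_in F x p y]: p = [:: (e1,v1); ...; (el,vl)] is a walk x=v0,e1,v1,...,el,vl=y
   in G \ F (all edges outside F). *)
Fixpoint walk_in (F : {set E}) (x : V) (p : seq (E * V)) (y : V) : bool :=
  match p with
  | [::] => x == y
  | (e, v) :: p' => [&& e \notin F, joins e x v & walk_in F v p' y]
  end.

Definition path_in (F : {set E}) (x : V) (p : seq (E * V)) (y : V) : bool :=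
  walk_in F x p y && uniq (x :: map snd p).

Definition len_le (s : extn) (p : seq (E * V)) : bool :=
  if s is Some n then size p <= n else true.

Definition spath_in (s : extn) (F : {set E}) x p y : bool :=
  path_in F x p y && len_le s p.

Definition edge_sep (s : extn) (x : V) (S : {set V}) (A : {set E}) : Prop :=
  forall (p : seq (E * V)) (y : V), y \in S -> spath_in s set0 x p y ->
    has (fun ev => ev.1 \in A) p.

(* supp_{G,s}(x,S): minimum size of an (s,x,S)-edge-separator
   (E itself is always a separator when x \notin S). *)
Definition supp (s : extn) (x : V) (S : {set V}) : nat :=
  \big[minn/#|E|]_(A : {set E} | `[< edge_sep s x S A >]) #|A|.

(* layouts: bijections 'I_#|V| -> V, L i = v_{i+1} *)
Definition layout := {ffun 'I_#|V| -> V}.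

Definition layout_degeneracy (s : extn) (L : layout) : nat :=
  \max_(i < #|V|) supp s (L i) [set L j | j in 'I_#|V| & (j < i)%N].

Definition edge_degeneracy (s : extn) : nat :=
  \big[minn/#|E|]_(L : layout | injectiveb L) layout_degeneracy s L.

Definition edge_hideout (k : nat) (s : extn) (R : {set V}) : Prop :=
  forall x, x \in R -> k <= supp s x (R :\ x).

Definition cop_strategy := V -> {set E}.
Definition cost (f : cop_strategy) : nat := \max_(v : V) #|f v|.

Definition robber_valid (s : extn) (g : {set E} -> V -> V) : Prop :=
  forall F v, exists p, spath_in s F v p (g F v).

Fixpoint scenario (f : cop_strategy) (vstart : V) (g : {set E} -> V -> V)
  (i : nat) : V :=
  match i with
  | 0 => vstart
  | i'.+1 => let v := scenario f vstart g i' in g (f v) v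
  end.

Definition cop_winning (f : cop_strategy) (vstart : V) (g : {set E} -> V -> V) :=
  exists i, scenario f vstart g i.+1 = scenario f vstart g i.

End Graph.

From mathcomp Require Import all_boot all_order.
From mathcomp Require Import boolp.

Set Implicit Arguments. Unset Strict Implicit. Unset Printing Implicit Defensive.

(* We prove the cycle of implications (1) => (2) => (3) => (1).
   - (1) => (2): on a nonempty (k+1,s)-edge-hide-out R the robber always has,
     against any k cop edges, an s-path to another vertex of R (otherwise those
     edges would be a small separator); such a robber never stops moving.
   - (2) => (3): without hide-outs every nonempty set R has a vertex of
     s-edge-support at most k into the rest of R; removing such vertices one at
     a time yields an elimination order, whose reverse is a layout of
     s-edge-degeneracy at most k.
   - (3) => (1): given a layout of degeneracy at most k, the cops occupy at v a
     minimum separator between v and its predecessors; the robber can then only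
     move to later vertices, so his position in the layout strictly increases
     and he must eventually stop. *)

Lemma bigmin_le (I : finType) (P : pred I) (F : I -> nat) d i :
  P i -> \big[minn/d]_(j | P j) F j <= F i.
Proof.
move=> Pi; have : i \in index_enum I by rewrite mem_index_enum.
elim: (index_enum I) => [//|j r IH]; rewrite inE big_cons => /orP[/eqP <-|ir].
  by rewrite Pi geq_minl.
by case: ifP => _; [rewrite geq_min IH ?orbT | exact: IH].
Qed.

Lemma bigmin_ind (I : finType) (P : pred I) (F : I -> nat) d (Q : nat -> Prop) :
  Q d -> (forall i, P i -> Q (F i)) -> Q (\big[minn/d]_(i | P i) F i).
Proof.
move=> Qd QF; apply: big_ind => // a b Qa Qb.
by rewrite /minn; case: ifP.
Qed.

(* The game stops as soon as some potential strictly increases at every move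
   of the robber: otherwise the potential would grow beyond its maximum. *)
Lemma scenario_potential (V E : finType) (f : cop_strategy V E) vstart
    (g : {set E} -> V -> V) (h : V -> nat) :
  (forall n, scenario f vstart g n.+1 != scenario f vstart g n ->
     h (scenario f vstart g n) < h (scenario f vstart g n.+1)) ->
  cop_winning f vstart g.
Proof.
move=> hup; apply: contrapT => nowin.
have grow n : n <= h (scenario f vstart g n).
  elim: n => [//|n IH]; apply: leq_ltn_trans IH (hup n _).
  by apply/eqP => stall; apply: nowin; exists n.
have := leq_trans (grow (\max_v h v).+1) (leq_bigmax (F := h) _).
by rewrite ltnn.
Qed.

Section Graph.
Variables (V E : finType) (ends : E -> V * V).

Lemma walk_inE (F : {set E}) x p y :
  walk_in ends F x p y = walk_in ends set0 x p y && ~~ has (fun ev => ev.1 \in F) p.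
Proof.
elim: p x => [|[e v] p IH] x /=; first by rewrite andbT.
by rewrite IH in_set0 negb_or; case: (e \in F); case: joins; rewrite ?andbF.
Qed.

Lemma spath_inE s (F : {set E}) x p y :
  spath_in ends s F x p y =
  spath_in ends s set0 x p y && ~~ has (fun ev => ev.1 \in F) p.
Proof.
rewrite /spath_in /path_in walk_inE.
by case: walk_in; case: uniq; case: len_le; case: has.
Qed.

Lemma spath_nil s F v : spath_in ends s F v [::] v.
Proof. by rewrite /spath_in /path_in /= eqxx; case: s. Qed.

Lemma supp_le_sep s x (S : {set V}) (A : {set E}) :
  edge_sep ends s x S A -> supp ends s x S <= #|A|.
Proof.
move=> sepA; apply: (bigmin_le (P := fun A => `[< edge_sep ends s x S A >])).
exact/asboolP.
Qed.

(* When x is outside S the support is the size of a minimum separator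
   (E itself separates, since only the trivial path can avoid all edges). *)
Lemma supp_attained s x (S : {set V}) :
  x \notin S -> exists A, edge_sep ends s x S A /\ #|A| = supp ends s x S.
Proof.
move=> xS; rewrite /supp.
apply: (bigmin_ind (Q := fun m => exists A, edge_sep ends s x S A /\ #|A| = m))
  => [|A /asboolP sepA]; last by exists A.
exists setT; split; last by rewrite cardsT.
move=> [|[e v] p] y yS //=; last by rewrite inE.
by rewrite /spath_in /path_in /= => /andP[/andP[/eqP xy _] _]; rewrite xy yS in xS.
Qed.

Lemma supp_le_card s x (S : {set V}) : supp ends s x S <= #|E|.
Proof.
apply: (bigmin_ind (Q := fun m => m <= #|E|)) => // A _.
by rewrite -cardsT subset_leq_card // subsetT.
Qed.

Definition enum_layout : layout V := [ffun i => @enum_val V (pred_of_simpl predT) i].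

Lemma enum_layout_inj : injectiveb enum_layout.
Proof. by apply/injectiveP => i j; rewrite !ffunE; exact: enum_val_inj. Qed.

Lemma layout_degeneracy_le_card s (L : layout V) : layout_degeneracy ends s L <= #|E|.
Proof. by apply/bigmax_leqP => i _; exact: supp_le_card. Qed.

Lemma hideout_escape k s (R : {set V}) (F : {set E}) v :
  edge_hideout ends k.+1 s R -> #|F| <= k -> v \in R ->
  exists p y, y \in R :\ v /\ spath_in ends s F v p y.
Proof.
move=> hideR cardF vR; apply: contrapT => noescape.
have sepF : edge_sep ends s v (R :\ v) F.
  move=> p y yR sp; apply/negPn/negP => avoid.
  by apply: noescape; exists p, y; rewrite spath_inE sp avoid.
have := leq_trans (hideR v vR) (leq_trans (supp_le_sep sepF) cardF).
by rewrite ltnn.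
Qed.

Lemma hideout_robber k s (R : {set V}) :
  edge_hideout ends k.+1 s R ->
  exists g, robber_valid ends s g /\
    forall (F : {set E}) v, v \in R -> #|F| <= k -> g F v \in R :\ v.
Proof.
move=> hideR.
have move_ok (Fv : {set E} * V) : exists y,
    (exists p, spath_in ends s Fv.1 Fv.2 p y) /\
    (Fv.2 \in R -> #|Fv.1| <= k -> y \in R :\ Fv.2).
  case: Fv => F v /=; case: (boolP ((v \in R) && (#|F| <= k))).
    case/andP=> vR cardF; have [p [y [yR sp]]] := hideout_escape hideR cardF vR.
    by exists y; split; [exists p | ].
  move=> stay; exists v; split; first by exists [::]; exact: spath_nil.
  by move=> vR cardF; rewrite vR cardF in stay.
have [u hu] := fin_all_exists move_ok.
by exists (fun F v => u (F, v)); split => F v; [exact: (hu (F, v)).1 | exact: (hu (F, v)).2].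
Qed.

(* A winning cop strategy of cost k excludes nonempty (k+1,s)-hide-outs: the
   robber above never stalls. *)
Lemma cops_no_hideout s k :
  (exists f : cop_strategy V E, cost f <= k /\
    forall vstart g, robber_valid ends s g -> cop_winning f vstart g) ->
  ~ (exists R : {set V}, R != set0 /\ edge_hideout ends k.+1 s R).
Proof.
move=> [f [costf win]] [R [/set0Pn [x0 x0R] hideR]].
have [g [valid_g gR]] := hideout_robber hideR.
have copk v : #|f v| <= k by exact: leq_trans (leq_bigmax (F := fun v => #|f v|) v) costf.
have inR n : scenario f x0 g n \in R.
  by elim: n => //= n IH; have := gR _ _ IH (copk (scenario f x0 g n)); rewrite in_setD1 => /andP[].
have [n stall] := win x0 g valid_g; move: stall => /= stall.
by have := gR _ _ (inR n) (copk (scenario f x0 g n)); rewrite stall in_setD1 eqxx.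
Qed.

(* [low_elimination s k r]: every vertex of r has s-edge-support at most k
   into the set of vertices following it in r; r read backwards is a layout. *)
Fixpoint low_elimination s k (r : seq V) : Prop :=
  if r is x :: r' then supp ends s x [set y in r'] <= k /\ low_elimination s k r'
  else True.

Lemma low_elimination_split s k r r1 x r2 :
  low_elimination s k r -> r = r1 ++ x :: r2 -> supp ends s x [set y in r2] <= k.
Proof.
elim: r1 r => [|z r1 IH] r lowr def_r; rewrite {}def_r in lowr; first by case: lowr.
by case: lowr => _ /IH; apply.
Qed.

Lemma low_support_vertex s k (R : {set V}) :
  ~ (exists R : {set V}, R != set0 /\ edge_hideout ends k.+1 s R) ->
  R != set0 -> exists2 x, x \in R & supp ends s x (R :\ x) <= k.
Proof.
move=> nohide R0; case: (boolP [exists x in R, supp ends s x (R :\ x) <= k]).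
  by case/exists_inP => x xR low; exists x.
move/exists_inPn => high; case: nohide; exists R; split => // x xR.
by rewrite ltnNge high.
Qed.

Lemma low_elimination_exists s k (R : {set V}) :
  ~ (exists R : {set V}, R != set0 /\ edge_hideout ends k.+1 s R) ->
  exists r, [/\ uniq r, r =i R & low_elimination s k r].
Proof.
move=> nohide; move: {2}#|R| (erefl #|R|) => n; elim: n R => [|n IH] R cardR.
  by exists [::]; split => // y; rewrite (cards0_eq cardR) inE.
have [|x xR lowx] := low_support_vertex (R := R) nohide; first by rewrite -card_gt0 cardR.
have [|r [uniq_r mem_r low_r]] := IH (R :\ x).
  by move: cardR; rewrite (cardsD1 x) xR add1n => -[].
exists (x :: r); split => //=.
- by rewrite uniq_r mem_r setD11.
- by move=> y; rewrite inE mem_r in_setD1; case: eqVneq => [->|].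
- by split=> //; rewrite (_ : [set y in r] = R :\ x) //; apply/setP => y; rewrite inE mem_r.
Qed.

Lemma layout_of_elimination s k r :
  uniq r -> (forall y, y \in r) -> low_elimination s k r ->
  exists L : layout V, injectiveb L /\ layout_degeneracy ends s L <= k.
Proof.
move=> uniq_r all_r low_r; set t := rev r.
have size_t : size t = #|V|.
  rewrite size_rev -(card_uniqP uniq_r); apply: eq_card => y.
  by rewrite all_r.
pose L : layout V := [ffun i => nth (@enum_val V (pred_of_simpl predT) i) t i].
have Lnth (i : 'I_#|V|) x0 : L i = nth x0 t i.
  by rewrite ffunE; apply: set_nth_default; rewrite size_t.
exists L; split.
  apply/injectiveP => i j; rewrite (Lnth i (L i)) (Lnth j (L i)).
  by move/eqP; rewrite nth_uniq ?rev_uniq ?size_t // => /eqP/val_inj.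
apply/bigmax_leqP => i _.
have before : [set L j | j in 'I_#|V| & (j < i)%N] = [set y in rev (take i t)].
  apply/setP => y; rewrite inE mem_rev; apply/imsetP/idP.
    move=> [j]; rewrite inE => /andP[_ ji] ->; rewrite (Lnth j (L i)).
    by rewrite -(nth_take _ ji) mem_nth // size_take size_t ltn_ord.
  move=> yt; have [j jlt <-] := nthP (L i) yt.
  move: jlt; rewrite size_take size_t ltn_ord => ji.
  exists (Ordinal (ltn_trans ji (ltn_ord i))); first by rewrite inE ji.
  by rewrite (Lnth _ (L i)) /= nth_take.
rewrite before; apply: (low_elimination_split low_r).
rewrite -[r]revK -/t -{1}(cat_take_drop i t) (drop_nth (L i)) ?size_t //.
by rewrite rev_cat rev_cons cat_rcons -(Lnth i).
Qed.

Lemma no_hideout_degeneracy s k :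
  ~ (exists R : {set V}, R != set0 /\ edge_hideout ends k.+1 s R) ->
  edge_degeneracy ends s <= k.
Proof.
move=> nohide; have [r [uniq_r mem_r low_r]] := low_elimination_exists [set: V] nohide.
have [|L [injL degL]] := layout_of_elimination uniq_r _ low_r.
  by move=> y; rewrite mem_r inE.
apply: leq_trans degL; exact: (bigmin_le (P := fun L : layout V => injectiveb L)).
Qed.

Section RankedCops.
Variables (s : extn) (k : nat) (rank : V -> nat).
Hypothesis rank_inj : injective rank.
Hypothesis rank_low : forall v, supp ends s v [set y | rank y < rank v] <= k.

Lemma rank_separators : exists f : cop_strategy V E,
  forall v, edge_sep ends s v [set y | rank y < rank v] (f v) /\ #|f v| <= k.
Proof.
suff /fin_all_exists [f sepf] : forall v, exists A : {set E},
    edge_sep ends s v [set y | rank y < rank v] A /\ #|A| <= k by exists f.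
move=> v; have [|A [sepA cardA]] := supp_attained s (x := v) (S := [set y | rank y < rank v]).
  by rewrite inE ltnn.
by exists A; rewrite cardA rank_low.
Qed.

Lemma escape_forward (A : {set E}) v w p :
  edge_sep ends s v [set y | rank y < rank v] A -> spath_in ends s A v p w ->
  w != v -> rank v < rank w.
Proof.
move=> sepA sp wv; rewrite ltn_neqAle eq_sym (inj_eq rank_inj) wv /= leqNgt.
apply/negP => wbefore; move: sp; rewrite spath_inE => /andP[sp0].
by rewrite (sepA _ _ _ sp0) // inE.
Qed.

(* Cops guarding the earlier vertices win: the rank of the robber increases. *)
Lemma ranked_cops_win : exists f : cop_strategy V E, cost f <= k /\
  forall vstart g, robber_valid ends s g -> cop_winning f vstart g.
Proof.
have [f sepf] := rank_separators; exists f; split.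
  by apply/bigmax_leqP => v _; case: (sepf v).
move=> vstart g valid_g; apply: (scenario_potential (h := rank)) => n moved /=.
set v := scenario f vstart g n in moved *.
have [p sp] := valid_g (f v) v.
exact: escape_forward (sepf v).1 sp moved.
Qed.

End RankedCops.

Lemma layout_rank s k (L : layout V) :
  injectiveb L -> layout_degeneracy ends s L <= k ->
  exists rank : V -> nat, injective rank /\
    forall v, supp ends s v [set y | rank y < rank v] <= k.
Proof.
move=> /injectiveP injL degL.
have [pos Lpos posL] : bijective L by apply: inj_card_bij; rewrite // card_ord.
exists (fun v => val (pos v)); split.
  by move=> u w /val_inj /(can_inj posL).
move=> v; move/bigmax_leqP: degL => /(_ (pos v) isT); rewrite posL.
congr (supp _ _ _ _ <= _); apply/setP => y; rewrite inE.
apply/imsetP/idP => [[j]|yv]; first by rewrite inE => /andP[_ ji] ->; rewrite Lpos.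
by exists (pos y); rewrite ?inE ?posL.
Qed.

Lemma degeneracy_cops s k : edge_degeneracy ends s <= k ->
  exists f : cop_strategy V E, cost f <= k /\
    forall vstart g, robber_valid ends s g -> cop_winning f vstart g.
Proof.
have [L [injL degL]] : exists L : layout V,
    injectiveb L /\ layout_degeneracy ends s L <= edge_degeneracy ends s.
  rewrite /edge_degeneracy; apply: (bigmin_ind (Q := fun m => exists L : layout V,
    injectiveb L /\ layout_degeneracy ends s L <= m)) => [|L injL]; last by exists L.
  by exists enum_layout; rewrite enum_layout_inj layout_degeneracy_le_card.
move=> degk; have [rank [rank_inj rank_low]] := layout_rank injL (leq_trans degL degk).
exact: ranked_cops_win rank_inj rank_low.
Qed.

End Graph.

Theorem mainTheorem1 (V E : finType) (ends : E -> V * V)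
  (loopless : forall e : E, (ends e).1 != (ends e).2)
  (s : extn) (s_pos : forall n, s = Some n -> 0 < n) (k : nat) :
  [/\ (exists f : cop_strategy V E,
         cost f <= k /\
         forall (vstart : V) (g : {set E} -> V -> V),
           robber_valid ends s g -> cop_winning f vstart g)
      <-> ~ (exists R : {set V}, R != set0 /\ edge_hideout ends k.+1 s R),
      ~ (exists R : {set V}, R != set0 /\ edge_hideout ends k.+1 s R)
      <-> edge_degeneracy ends s <= k
    & edge_degeneracy ends s <= k
      <-> (exists f : cop_strategy V E,
         cost f <= k /\
         forall (vstart : V) (g : {set E} -> V -> V),
           robber_valid ends s g -> cop_winning f vstart g)].
Proof.
have cops_hide := @cops_no_hideout V E ends s k.
have hide_deg := @no_hideout_degeneracy V E ends s k.
have deg_cops := @degeneracy_cops V E ends s k.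
by split; split; auto.
Qed.
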